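(* Let $L\ge1$ be an integer and $r\in[0,\frac{L}{L+1})$. There exists $N=N(r,L)$ such that for all integers $q\ge 2$ with $L\le q$ and all $n\ge N$ with $rn\in\mathbb{N}$ and $rn\equiv L-1\pmod L$, every $(r,L)$ list-decodable code $C\subseteq[q]^n$ satisfies $|C|\le q^{\,n-\lfloor\frac{L+1}{L}rn\rfloor}$.
   Context: $[q]=\{1,\dots,q\}$. A code is a subset $C\subseteq[q]^n$. $B_t(v)$ denotes the Hamming ball of radius $t$ around $v\in[q]^n$ (Hamming distance = number of differing coordinates). A code $C$ is $(r,L)$ list-decodable if $|B_{rn}(v)\cap C|\le L$ for all $v\in[q]^n$. *)

From HB Require Import structures.
From mathcomp Require Import all_boot all_order all_algebra.
From mathcomp Require Import reals.
Set Implicit Arguments. Unset Strict Implicit. Unset Printing Implicit Defensive.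
Import Order.TTheory GRing.Theory Num.Theory.

(* Words of length n over the alphabet [q] = 'I_q (0-based relabelling). *)
Definition word (q n : nat) := {ffun 'I_n -> 'I_q}.

Definition hamming (q n : nat) (u v : word q n) : nat :=
  #|[set i : 'I_n | u i != v i]|.

Definition list_decodable (R : realType) (q n : nat) (r : R) (L : nat)
  (C : {set word q n}) : Prop :=
  forall v : word q n,
    (#|[set c in C | ((hamming c v)%:R <= r * n%:R)%R]| <= L)%N.

(** Write [k = m L + (L - 1)], so that [(L + 1) k / L = k + m], and let
    [s = n - k - m - 1].  If [|C| > q^(s+1)], pigeonholing on the first [s]
    coordinates gives more than [q] codewords with a common prefix, and
    among them two, [a] and [b], agreeing at coordinate [s + m].  Together
    with [L - 1] further words [c_2, ..., c_L] of this fiber, build [v] by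
    copying, after the common prefix, consecutive blocks of length [m + 1]
    from [a, b, c_2, ..., c_L], the blocks of [a] and [b] overlapping at
    coordinate [s + m].  Each of these [L + 1] codewords agrees with [v] on
    at least [s + m + 1] coordinates, hence lies within distance
    [n - s - m - 1 = k = r n] of [v], contradicting list decodability. *)
From HB Require Import structures.
From mathcomp Require Import all_boot all_order all_algebra.
From mathcomp Require Import reals.
From mathcomp Require Import zify.
Import Order.TTheory GRing.Theory Num.Theory.

Lemma card_ord_interval n lo hi : hi <= n ->
  #|[set i : 'I_n | lo <= i < hi]| = hi - lo.
Proof.
move=> hi_n; rewrite -[hi - lo]muln1 -sum_nat_const_nat big_geq_mkord.
rewrite (big_ord_widen_cond n (fun i => true && (lo <= i)) (fun=> 1) hi_n).
by rewrite -sum1_card; apply: eq_bigl => i; rewrite inE andbC.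
Qed.

Lemma exists_large_fiber (T U : finType) (f : T -> U) (A : {set T}) k :
  k * #|U| < #|A| -> exists u, k < #|[set x in A | f x == u]|.
Proof.
move=> ltA; apply/existsP; apply: contraLR ltA => /existsPn small.
rewrite -leqNgt -sum1_card (partition_big f predT) //= mulnC -sum_nat_const.
apply: leq_sum => u _; have := small u; rewrite -leqNgt; apply: leq_trans.
by rewrite -sum1_card; apply: eq_leq; apply: eq_bigl => x; rewrite !inE.
Qed.

Section Splicing.

Variables q n : nat.
Implicit Types (c v : word q n) (cs : seq (word q n)).

Definition word_prefix (s : nat) (hs : s <= n) c : {ffun 'I_s -> 'I_q} :=
  [ffun i => c (widen_ord hs i)].
Arguments word_prefix {s}.

Lemma word_prefix_eq s (hs : s <= n) c v :
  word_prefix hs c = word_prefix hs v -> forall i : 'I_n, i < s -> c i = v i.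
Proof.
move=> /ffunP eq_cv i lt_is; have := eq_cv (Ordinal lt_is).
by rewrite !ffunE (_ : widen_ord _ _ = i) //; apply: val_inj.
Qed.

Lemma hamming_le_of_agree s lo m c v : s <= lo -> lo + m.+1 <= n ->
  (forall i : 'I_n, i < s -> c i = v i) ->
  (forall i : 'I_n, lo <= i < lo + m.+1 -> c i = v i) ->
  hamming c v <= n - s - m.+1.
Proof.
move=> s_lo lo_n agree_prefix agree_block.
have disagree : [set i | c i != v i] \subset
    [set i : 'I_n | s <= i < lo] :|: [set i : 'I_n | lo + m.+1 <= i < n].
  apply/subsetP => i; rewrite !inE ltn_ord andbT => /eqP neq_cv.
  have [/agree_prefix //|_] := ltnP i s.
  have [//|lo_i] /= := ltnP i lo; rewrite leqNgt; apply/negP => i_hi.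
  by apply: neq_cv; apply: agree_block; rewrite lo_i.
apply: leq_trans (subset_leq_card disagree) _.
apply: leq_trans (leq_card_setU _ _) _.
by rewrite !card_ord_interval //; lia.
Qed.

(* Coordinate [i] is copied from [cs_j], [j = (i + 1 - s) / (m + 1)]: the
   blocks of length [m + 1] start one step before [s], so that the block of
   [cs_0] covers [s, s + m) only and the one of [cs_1] covers [s + m]. *)
Definition splice (s m : nat) x0 cs : word q n :=
  [ffun i : 'I_n => nth x0 cs ((i.+1 - s) %/ m.+1) i].

Lemma hamming_splice_head s m x0 cs :
  (forall i : 'I_n, i = s + m :> nat -> nth x0 cs 0 i = nth x0 cs 1 i) ->
  s + m < n -> hamming (nth x0 cs 0) (splice s m x0 cs) <= n - s - m.+1.
Proof.
move=> meet sm_n; apply: (@hamming_le_of_agree s s m) => //.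
- by rewrite addnS.
- by move=> i lt_is; rewrite ffunE (_ : i.+1 - s = 0) ?div0n //; lia.
move=> i /andP[s_i lt_i]; rewrite ffunE; have [eq_i|ne_i] := eqVneq (i : nat) (s + m).
  by rewrite eq_i (_ : (s + m).+1 - s = 1 * m.+1) ?mulnK ?meet //; lia.
by rewrite divn_small //; lia.
Qed.

Lemma hamming_splice_block s m x0 cs j : 0 < j -> s + j.+1 * m.+1 <= n.+1 ->
  (forall i : 'I_n, i < s -> nth x0 cs j i = nth x0 cs 0 i) ->
  hamming (nth x0 cs j) (splice s m x0 cs) <= n - s - m.+1.
Proof.
move=> j_gt0 j_n agree_prefix.
apply: (@hamming_le_of_agree s (s + j * m.+1).-1 m) => //; try nia.
  by move=> i lt_is; rewrite ffunE (_ : i.+1 - s = 0) ?div0n ?agree_prefix //; lia.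
move=> i /andP[lo_i i_hi]; rewrite ffunE.
rewrite (_ : i.+1 - s = j * m.+1 + (i.+1 - s - j * m.+1)); last by nia.
by rewrite divnMDl // divn_small ?addn0 //; nia.
Qed.

Lemma card_ball_splice (L s m : nat) x0 cs (C : {set word q n}) :
  0 < L -> n.+1 = s + L.+1 * m.+1 -> L < size cs -> uniq cs -> {subset cs <= C} ->
  {in cs, forall c (i : 'I_n), i < s -> c i = nth x0 cs 0 i} ->
  (forall i : 'I_n, i = s + m :> nat -> nth x0 cs 0 i = nth x0 cs 1 i) ->
  L < #|[set c in C | hamming c (splice s m x0 cs) <= n - s - m.+1]|.
Proof.
move=> L_gt0 n_eq L_cs uniq_cs cs_C agree_prefix meet.
have lt_cs (j : 'I_L.+1) : j < size cs by apply: leq_trans L_cs.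
have inj_nth : injective (fun j : 'I_L.+1 => nth x0 cs j).
  by move=> j1 j2 /eqP; rewrite nth_uniq // => /eqP/val_inj.
rewrite -[L.+1]card_ord -(card_imset _ inj_nth).
apply/subset_leq_card/subsetP => _ /imsetP[j _ ->].
rewrite inE cs_C ?mem_nth //=; have [j0|j_gt0] := posnP j.
  by rewrite j0; apply: hamming_splice_head => //; nia.
apply: hamming_splice_block => // [|i].
  by rewrite n_eq leq_add2l leq_mul2r ltn_ord orbT.
by apply: agree_prefix; rewrite mem_nth.
Qed.

Lemma card_code_le_of_ball_card_le (L s m : nat) (C : {set word q n}) :
  0 < L -> L <= q -> n.+1 = s + L.+1 * m.+1 ->
  (forall v, #|[set c in C | hamming c v <= n - s - m.+1]| <= L) ->
  #|C| <= q ^ s.+1.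
Proof.
move=> L_gt0 L_q n_eq small_balls; rewrite leqNgt; apply/negP => C_big.
have s_n : s <= n by nia.
have [u F_big] : exists u, q < #|[set c in C | word_prefix s_n c == u]|.
  by apply: exists_large_fiber; rewrite card_ffun !card_ord -expnS.
set F := [set c in C | _] in F_big.
have sm_n : s + m < n by nia.
have [w] : exists w, 1 < #|[set c in F | c (Ordinal sm_n) == w]|.
  by apply: exists_large_fiber; rewrite card_ord mul1n.
case/card_gt1P => a [b [/setIdP[aF /eqP aw] /setIdP[bF /eqP bw] neq_ab]].
pose cs := a :: b :: enum (F :\ a :\ b).
have F_C : {subset F <= C} by move=> c /setIdP[].
have cs_F : {subset cs <= F}.
  by move=> c; rewrite 2!inE mem_enum => /or3P[/eqP->|/eqP->|/setD1P[_ /setD1P[]]].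
have uniq_cs : uniq cs.
  by rewrite /= enum_uniq inE !mem_enum !in_setD1 (negbTE neq_ab) !eqxx andbF.
have size_cs : size cs = #|F|.
  by rewrite /= -cardE (cardsD1 a F) (cardsD1 b (F :\ a)) aF in_setD1 eq_sym neq_ab bF.
apply/negP: (small_balls (splice s m a cs)); rewrite -ltnNge.
apply: card_ball_splice => //; first by rewrite size_cs; apply: leq_trans F_big.
- by move=> c /cs_F/F_C.
- move=> c /cs_F /setIdP[_ /eqP pc] i; apply: word_prefix_eq.
  by rewrite pc; move/setIdP: aF => [_ /eqP].
- by move=> i eq_i; rewrite /= (_ : i = Ordinal sm_n) ?aw ?bw //; apply: val_inj.
Qed.

End Splicing.

Lemma ltn_mul_of_lt_ratio {R : numFieldType} {L n k : nat} {r : R} :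
  0 < n -> (r < L%:R / (L + 1)%:R)%R -> (r * n%:R = k%:R)%R ->
  (L + 1) * k < L * n.
Proof.
move=> n_gt0 r_lt rn_k; rewrite -(ltr_nat R) !natrM -rn_k mulrA.
by rewrite ltr_pM2r ?ltr0n // mulrC -ltr_pdivlMr // ltr0n addn1.
Qed.

Theorem corollary3p3 (R : realType) (L : nat) (r : R) :
  (1 <= L)%N ->
  (0 <= r)%R -> (r < L%:R / (L + 1)%:R)%R ->
  exists N : nat, forall q n : nat,
    (2 <= q)%N -> (L <= q)%N -> (N <= n)%N ->
    forall k : nat, (r * n%:R = k%:R)%R -> k = (L - 1)%N %[mod L] ->
    forall C : {set word q n}, list_decodable r L C ->
      (#|C| <= q ^ (n - ((L + 1) * k) %/ L))%N.
Proof.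
move=> L_gt0 _ r_lt; exists 1 => q n _ L_q n_gt0 k rn_k k_mod C dec_C.
set m := k %/ L.
have k_eq : k = m * L + (L - 1) by rewrite {1}(divn_eq k L) k_mod modn_small //; lia.
have -> : (L + 1) * k %/ L = k + m by rewrite mulnDl mul1n mulnC divnMDl.
have Lk_lt := ltn_mul_of_lt_ratio n_gt0 r_lt rn_k.
clearbody m.
have km_n : k + m < n by nia.
rewrite (_ : n - (k + m) = (n - (k + m)).-1.+1); last by lia.
apply: (@card_code_le_of_ball_card_le q n L _ m) => //; first by nia.
move=> v; apply: leq_trans (dec_C v); apply/subset_leq_card/subsetP => c.
by rewrite !inE rn_k ler_nat => /andP[-> /leq_trans->] //; lia.
Qed.
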